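(* For every $n>3$ and every $\alpha\in\{28,32,44,140\}$, the sensitivity to synchronism of elementary cellular automaton rule $\alpha$ satisfies $\mu(f_{\alpha,n})=\dfrac{2^n-1}{3^n-2^{n+1}+2}$.
   Context: Cells are indexed by $\mathbb{Z}_n=\{0,\dots,n-1\}$, indices modulo $n$. The local rules are $r_{28}(x_1,x_2,x_3)=(\neg x_1\wedge x_2)\vee(x_1\wedge\neg x_2\wedge\neg x_3)$, $r_{32}=x_1\wedge\neg x_2\wedge x_3$, $r_{44}=(\neg x_1\wedge x_2)\vee(x_1\wedge\neg x_2\wedge x_3)$, $r_{140}=x_2\wedge(\neg x_1\vee x_3)$. The global function is $f_{\alpha,n}(x)_i=r_\alpha(x_{i-1},x_i,x_{i+1})$. An update schedule is an ordered partition $\Delta=(\Delta_1,\dots,\Delta_k)$ of $\mathbb{Z}_n$ into nonempty blocks; $\mathcal{P}_n$ is the set of them. For a block $B$ let $f^{(B)}(x)_i=f_{\alpha,n}(x)_i$ if $i\in B$ and $x_i$ otherwise; $f^{(\Delta)}_{\alpha,n}=f^{(\Delta_k)}\circ\cdots\circ f^{(\Delta_1)}$. The dynamics of $\Delta$ is the transition digraph with arcs $(x,f^{(\Delta)}_{\alpha,n}(x))$; $\mathcal{D}(f_{\alpha,n})$ is the set of distinct dynamics over $\Delta\in\mathcal{P}_n$. The sensitivity to synchronism is $\mu(f_{\alpha,n})=|\mathcal{D}(f_{\alpha,n})|/(3^n-2^{n+1}+2)$. *)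

From mathcomp Require Import all_boot all_order all_algebra.
Set Implicit Arguments. Unset Strict Implicit. Unset Printing Implicit Defensive.
Import GRing.Theory Num.Theory.

(* Configurations over Z_n = 'I_n (indices taken modulo n). *)
Definition conf (n : nat) := {ffun 'I_n -> bool}.

Lemma ord_n_gt0 n (i : 'I_n) : 0 < n.
Proof. exact: leq_ltn_trans (leq0n i) (ltn_ord i). Qed.

Definition shift n (i : 'I_n) (d : nat) : 'I_n :=
  Ordinal (ltn_pmod (i + d) (ord_n_gt0 i)).
Definition prev n (i : 'I_n) : 'I_n := shift i n.-1.
Definition next n (i : 'I_n) : 'I_n := shift i 1.

Definition rule (alpha : nat) (x1 x2 x3 : bool) : bool :=
  if alpha == 28 then (~~ x1 && x2) || (x1 && ~~ x2 && ~~ x3)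
  else if alpha == 32 then x1 && ~~ x2 && x3
  else if alpha == 44 then (~~ x1 && x2) || (x1 && ~~ x2 && x3)
  else if alpha == 140 then x2 && (~~ x1 || x3)
  else false.

Definition gf (alpha n : nat) (x : conf n) : conf n :=
  [ffun i => rule alpha (x (prev i)) (x i) (x (next i))].

Definition block_update (alpha n : nat) (B : {set 'I_n}) (x : conf n) : conf n :=
  [ffun i => if i \in B then gf alpha x i else x i].

Definition sched_update (alpha n : nat) (D : seq {set 'I_n}) (x : conf n) : conf n :=
  foldl (fun y B => block_update alpha B y) x D.

Definition is_schedule (n : nat) (D : seq {set 'I_n}) : bool :=
  [&& all (fun B => B != set0) D,
      pairwise (fun A B : {set 'I_n} => [disjoint A & B]) D &
      \bigcup_(B <- D) B == [set: 'I_n]].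

(* dynamics of Delta: the transition digraph, as its arc set *)
Definition dynamics (alpha n : nat) (D : seq {set 'I_n}) : {set conf n * conf n} :=
  [set (x, sched_update alpha D x) | x : conf n].

(* D(f_{alpha,n}): set of distinct dynamics over all update schedules.
   An ordered partition of Z_n into nonempty blocks has k <= n blocks,
   so it is a k-tuple of sets for some k < n.+1. *)
Definition all_dynamics (alpha n : nat) : {set {set conf n * conf n}} :=
  [set G | [exists k : 'I_n.+1, exists t : (nat_of_ord k).-tuple {set 'I_n},
              is_schedule (tval t) && (G == dynamics alpha (tval t))]].

Definition mu (alpha n : nat) : rat :=
  (#|all_dynamics alpha n|%:R) / (3%:R ^+ n - 2%:R ^+ n.+1 + 2%:R).

From Pilot Require Import Defs.
From mathcomp Require Import all_boot all_order all_algebra.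
From mathcomp Require Import zify.
Set Implicit Arguments. Unset Strict Implicit. Unset Printing Implicit Defensive.

(* When a cell is updated under an ordered partition, it reads the new value of
   a neighbour exactly when that neighbour lies in an earlier block.  For the
   rules 28 and 44 only the dependency on the left neighbour matters, for 140
   only the one on the right neighbour, and for 32 only whether some neighbour
   comes earlier (the cell is then forced to 0).  Hence f^(Delta) is the unique
   solution of a system of equations determined by a labelling of the cells,
   acyclic because the labels follow the block order.  Every labelling except
   the constant true one arises (a cell of the first block is labelled false;
   conversely, rank each cell by the length of the run of true labels starting
   at it), and test configurations around a cell read its label off the
   dynamics.  So the dynamics are in bijection with the 2^n - 1 labellings
   other than the constant true one. *)

(* path.v, imported after Defs, also exports [prev] and [next]. *)
Notation prev := Defs.prev.
Notation next := Defs.next.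

Section Schedule.
Variables (alpha n : nat).
Implicit Types (D : seq {set 'I_n}) (x : conf n) (i j : 'I_n).

Definition rank D i : nat := find (fun B : {set 'I_n} => i \in B) D.

Lemma rank_lt_size D i : is_schedule D -> rank D i < size D.
Proof.
case/and3P=> _ _ /eqP cover; rewrite /rank -has_find.
have : i \in \bigcup_(B <- D) B by rewrite cover inE.
by rewrite bigcup_seq => /bigcupP [B BD iB]; apply/hasP; exists B.
Qed.

Lemma mem_nth_schedule D m i : is_schedule D -> m < size D ->
  (i \in nth set0 D m) = (rank D i == m).
Proof.
move=> sD mD; have iD := rank_lt_size i sD.
have i_rank : i \in nth set0 D (rank D i).
  by apply: (nth_find set0 (a := fun B : {set 'I_n} => i \in B)); rewrite has_find.
case: eqP => [<- // | ne]; apply/negP => im.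
have : rank D i <= m by rewrite leqNgt; apply/negP => /(before_find set0) /=; rewrite im.
rewrite leq_eqVlt (introF eqP ne) /= => lt.
case/and3P: sD => _ /(pairwiseP set0) disj _.
by rewrite (disjointFr (disj _ _ iD mD lt) i_rank) in im.
Qed.

Lemma sched_update_takeS D x m : m < size D ->
  sched_update alpha (take m.+1 D) x =
  block_update alpha (nth set0 D m) (sched_update alpha (take m D) x).
Proof. by move=> mD; rewrite /sched_update (take_nth set0 mD) foldl_rcons. Qed.

Lemma sched_update_take D x m i : is_schedule D -> m <= size D ->
  sched_update alpha (take m D) x i =
  if rank D i < m then sched_update alpha (take (rank D i).+1 D) x i else x i.
Proof.
move=> sD; elim: m => [|m IH] mD; first by rewrite take0 ltn0.
rewrite sched_update_takeS // ffunE mem_nth_schedule // ltnS leq_eqVlt.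
have [rk | ne] /= := eqVneq (rank D i) m.
  by rewrite rk sched_update_takeS // [in RHS]ffunE mem_nth_schedule // rk eqxx.
by rewrite IH ?(ltnW mD).
Qed.

(* The value of cell [j] at the moment cell [i] is updated. *)
Definition seen D x i j : bool :=
  if rank D j < rank D i then sched_update alpha D x j else x j.

Lemma sched_update_cell D x i : is_schedule D ->
  sched_update alpha D x i =
  rule alpha (seen D x i (prev i)) (x i) (seen D x i (next i)).
Proof.
move=> sD; have iD := rank_lt_size i sD.
have finalE j : sched_update alpha D x j =
                sched_update alpha (take (rank D j).+1 D) x j.
  have -> : sched_update alpha D x = sched_update alpha (take (size D) D) x.
    by rewrite take_size.
  by rewrite sched_update_take // rank_lt_size.
rewrite finalE sched_update_takeS // ffunE mem_nth_schedule // eqxx ffunE.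
rewrite /seen ![sched_update _ (take (rank D i) D) _ _]sched_update_take ?(ltnW iD) //.
by rewrite ltnn -!finalE.
Qed.

Lemma seen_later D x i j : rank D i < rank D j -> seen D x i j = x j.
Proof. by move=> ij; rewrite /seen ltnNge ltnW. Qed.

Lemma sched_update_dynamics D1 D2 : dynamics alpha D1 = dynamics alpha D2 ->
  sched_update alpha D1 =1 sched_update alpha D2.
Proof.
move=> eqD x; have : (x, sched_update alpha D1 x) \in dynamics alpha D2.
  by rewrite -eqD; apply: imset_f.
by case/imsetP => x' _ [-> ->].
Qed.
End Schedule.

Section RankingSchedule.
Variables (n : nat) (t : 'I_n -> nat).

Definition levels := sort leq (undup [seq t i | i <- enum 'I_n]).
Definition ranking_schedule : seq {set 'I_n} := [seq [set i | t i == k] | k <- levels].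

Lemma levels_sorted : sorted ltn levels.
Proof.
by rewrite ltn_sorted_uniq_leq sort_uniq undup_uniq sort_sorted //; exact: leq_total.
Qed.

Lemma mem_levels i : t i \in levels.
Proof. by rewrite mem_sort mem_undup; apply: map_f; rewrite mem_enum. Qed.

Lemma ranking_schedule_is_schedule : is_schedule ranking_schedule.
Proof.
apply/and3P; split.
- apply/allP => B /mapP [k]; rewrite mem_sort mem_undup => /mapP [i _ ->] ->.
  by apply/set0Pn; exists i; rewrite inE.
- rewrite pairwise_map; apply: (@sub_pairwise _ [rel k l | k != l]).
    move=> k l /= kl; rewrite -setI_eq0; apply/eqP/setP => i; rewrite !inE.
    by apply/negP => /andP [/eqP -> /eqP e]; rewrite e eqxx in kl.
  by rewrite -uniq_pairwise sort_uniq undup_uniq.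
- apply/eqP/setP => i; rewrite in_setT big_map (big_rem (t i)) ?mem_levels //=.
  by rewrite in_setU inE eqxx.
Qed.

Lemma size_ranking_schedule : size ranking_schedule <= n.
Proof.
by rewrite size_map size_sort (leq_trans (size_undup _)) // size_map size_enum_ord.
Qed.

Lemma rank_ranking_schedule i : rank ranking_schedule i = index (t i) levels.
Proof. by rewrite /rank find_map /index; apply: eq_find => k /=; rewrite inE eq_sym. Qed.

Lemma ltn_rank_ranking_schedule i j :
  (rank ranking_schedule i < rank ranking_schedule j) = (t i < t j).
Proof.
rewrite !rank_ranking_schedule.
have [ti tj] := (mem_levels i, mem_levels j).
have ltn_index := sorted_ltn_index ltn_trans levels_sorted.
case: ltngtP => [lt | gt | eq].
- by rewrite (ltn_index _ _ ti tj lt).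
- by apply/esym/negbTE; rewrite -leqNgt ltnW // (ltn_index _ _ tj ti gt).
- by have := congr1 (nth 0 levels) eq; rewrite !nth_index // => ->; rewrite ltnn.
Qed.
End RankingSchedule.

Section Cycle.
Variable n : nat.
Implicit Types i j : 'I_n.

Lemma next_shift i d : next (shift i d) = shift i d.+1.
Proof. by apply: val_inj; rewrite /= modnDml addn1 -addnS. Qed.

Lemma shift0 i : shift i 0 = i.
Proof. by apply: val_inj; rewrite /= addn0 modn_small. Qed.

Lemma prev_next i : prev (next i) = i.
Proof.
have n_gt0 := ord_n_gt0 i; apply: val_inj; rewrite /= modnDml.
have -> : i + 1 + n.-1 = i + n by lia.
by rewrite modnDr modn_small.
Qed.

Lemma next_prev i : next (prev i) = i.
Proof.
have n_gt0 := ord_n_gt0 i; apply: val_inj; rewrite /= modnDml.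
have -> : i + n.-1 + 1 = i + n by lia.
by rewrite modnDr modn_small.
Qed.

Lemma prev_shiftS i d : prev (shift i d.+1) = shift i d.
Proof. by rewrite -next_shift prev_next. Qed.

Lemma shift_inj i a b : a < b < a + n -> (shift i a == shift i b) = false.
Proof.
case/andP=> ab ban; apply/negbTE/negP => /eqP /(congr1 val) /= /eqP.
rewrite eqn_modDl eq_sym eqn_mod_dvd ?(ltnW ab) // => /dvdn_leq.
by rewrite subn_gt0 ab => /(_ isT); lia.
Qed.

Lemma iter_next i e : iter e (@next n) i = shift i e.
Proof. by elim: e => [|e IH]; rewrite ?shift0 //= IH next_shift. Qed.

Lemma iter_nextK e : cancel (iter e (@next n)) (iter e (@prev n)).
Proof. by elim: e => [|e IH] i //; rewrite iterSr iterS prev_next IH. Qed.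

Lemma iter_prevK e : cancel (iter e (@prev n)) (iter e (@next n)).
Proof. by elim: e => [|e IH] i //; rewrite iterSr iterS next_prev IH. Qed.

Lemma next_transitive i j : exists2 e, e < n & iter e (@next n) i = j.
Proof.
have n_gt0 := ord_n_gt0 i.
exists ((j + n - i) %% n); first by rewrite ltn_mod.
apply: val_inj; rewrite iter_next /= modnDmr.
have -> : i + (j + n - i) = j + n by have := ltn_ord i; lia.
by rewrite modnDr modn_small.
Qed.

Lemma prev_transitive i j : exists2 e, e < n & iter e (@prev n) i = j.
Proof. by have [e en <-] := next_transitive j i; exists e; rewrite ?iter_nextK. Qed.

Lemma exists_shift i d : exists j, shift j d = i.
Proof. by exists (iter d (@prev n) i); rewrite -iter_next iter_prevK. Qed.
End Cycle.

(* Decides the equalities [shift j a == shift j b] between explicit offsets,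
   using the bound on [n] in the context. *)
Ltac simpl_shift_eqs := repeat match goal with
  | |- context [shift ?j ?a == shift ?j ?a] => rewrite eqxx
  | |- context [shift ?j ?a == shift ?j ?b] =>
      first [ rewrite (@shift_inj _ j a b); [|lia]
            | rewrite eq_sym (@shift_inj _ j b a); [|lia] ]
  end.

Definition window n (j : 'I_n) (s : seq nat) : conf n :=
  [ffun k => k \in [seq shift j d | d <- s]].

Section Run.
Variables (n : nat) (phi : {ffun 'I_n -> bool}) (nb : 'I_n -> 'I_n).

Fixpoint run N i := if N is N'.+1 then (if phi i then (run N' (nb i)).+1 else 0) else 0.

Lemma run_eq0 N i : ~~ phi i -> run N i = 0.
Proof. by case: N => //= N /negbTE ->. Qed.

Lemma run_addn N k i : (exists2 e, e < N & ~~ phi (iter e nb i)) ->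
  run (N + k) i = run N i.
Proof.
elim: N i => [|N IH] i [e]; first by [].
rewrite addSn /=; case: ifP => // phi_i.
case: e => [|e] eN; first by rewrite phi_i.
by rewrite iterSr => ne; rewrite IH //; exists e.
Qed.

Lemma run_nb N i : phi i -> (exists2 e, e < N & ~~ phi (iter e nb i)) ->
  run N i = (run N (nb i)).+1.
Proof.
case: N => [|N] phi_i [[|e] eN ne]; rewrite ?phi_i // in eN ne *.
have -> : run N.+1 (nb i) = run N (nb i).
  by rewrite -addn1 run_addn //; exists e; rewrite -?iterSr.
by rewrite /= phi_i.
Qed.

Hypothesis nb_transitive : forall i j, exists2 e, e < n & iter e nb i = j.

Lemma ltn_run i : phi != [ffun=> true] -> (run n (nb i) < run n i) = phi i.
Proof.
move=> ne1; case phi_i: (phi i); last by rewrite [run n i]run_eq0 ?phi_i ?ltn0.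
have [j phi_j] : exists j, ~~ phi j.
  apply/existsP; apply: contraR ne1; rewrite negb_exists => /forallP all_phi.
  by apply/eqP/ffunP => j; rewrite ffunE; move: (all_phi j); rewrite negbK.
have [e en ej] := nb_transitive i j.
by rewrite (run_nb phi_i) ?ltnSn //; exists e; rewrite ?ej.
Qed.
End Run.

Section Classification.
Variables (n : nat) (nb : 'I_n -> 'I_n).
Variable reads_new : {ffun 'I_n -> bool} -> 'I_n -> bool.
Variable local : conf n -> {ffun 'I_n -> bool} -> 'I_n -> bool -> bool.

(* [local x phi i v] is the new value of cell [i] when the value it reads at
   [nb i] is [v], the new one if [reads_new phi i] and the old one otherwise. *)
Definition solves phi x (y : conf n) :=
  forall i, y i = local x phi i (if reads_new phi i then y (nb i) else x (nb i)).

Definition indistinguishable phi phi' :=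
  forall x, exists y, solves phi x y /\ solves phi' x y.

Lemma solves_uniq (t : 'I_n -> nat) phi x y1 y2 :
  (forall i, reads_new phi i -> t (nb i) < t i) ->
  solves phi x y1 -> solves phi x y2 -> y1 = y2.
Proof.
move=> decr s1 s2; apply/ffunP => i.
suff eq_below m j : t j < m -> y1 j = y2 j by exact: (eq_below (t i).+1).
elim: m j => [|m IH] j //; rewrite ltnS => tj.
rewrite s1 s2; case r: (reads_new phi j) => //.
by rewrite IH // (leq_trans (decr _ r)).
Qed.

Variables (alpha : nat) (label : ('I_n -> nat) -> {ffun 'I_n -> bool}).
Variable ranking_of : {ffun 'I_n -> bool} -> 'I_n -> nat.

Hypothesis label_order : forall t t',
  (forall i j, (t i < t j) = (t' i < t' j)) -> label t = label t'.
Hypothesis reads_new_label : forall t i, reads_new (label t) i -> t (nb i) < t i.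
Hypothesis label_neq1 : forall t, label t != [ffun=> true].
Hypothesis label_ranking_of : forall phi,
  phi != [ffun=> true] -> label (ranking_of phi) = phi.
Hypothesis sched_update_solves : forall D x,
  is_schedule D -> solves (label (rank D)) x (sched_update alpha D x).
Hypothesis indistinguishable_eq : forall phi phi',
  phi != [ffun=> true] -> phi' != [ffun=> true] ->
  indistinguishable phi phi' -> phi = phi'.

Let schedule_of phi := ranking_schedule (ranking_of phi).

Lemma label_schedule_of phi :
  phi != [ffun=> true] -> label (rank (schedule_of phi)) = phi.
Proof.
move=> ne1; rewrite -{2}(label_ranking_of ne1); apply: label_order.
exact: ltn_rank_ranking_schedule.
Qed.

Lemma dynamics_label D1 D2 : is_schedule D1 -> is_schedule D2 ->
  label (rank D1) = label (rank D2) -> dynamics alpha D1 = dynamics alpha D2.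
Proof.
move=> s1 s2 eqL; apply: eq_imset => x; congr (_, _).
apply: (@solves_uniq (rank D1) (label (rank D1)) x); first exact: reads_new_label.
  exact: sched_update_solves.
by rewrite eqL; exact: sched_update_solves.
Qed.

Lemma all_dynamicsE : all_dynamics alpha n =
  [set dynamics alpha (schedule_of phi) | phi in [set~ [ffun=> true]]].
Proof.
apply/setP => G; apply/idP/idP.
- rewrite inE => /existsP [k /existsP [D /andP [sD /eqP ->]]].
  apply/imsetP; exists (label (rank D)); first by rewrite !inE label_neq1.
  apply: dynamics_label => //; first exact: ranking_schedule_is_schedule.
  by rewrite label_schedule_of ?label_neq1.
- case/imsetP => phi _ ->; rewrite inE; apply/existsP.
  have size_lt : size (schedule_of phi) < n.+1.
    by rewrite ltnS size_ranking_schedule.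
  exists (Ordinal size_lt); apply/existsP; exists (in_tuple (schedule_of phi)).
  by rewrite /= ranking_schedule_is_schedule eqxx.
Qed.

Lemma card_all_dynamics : #|all_dynamics alpha n| = (2 ^ n).-1.
Proof.
rewrite all_dynamicsE card_in_imset.
  by rewrite cardsC1 card_ffun card_bool card_ord.
move=> phi phi'; rewrite !inE => ne1 ne1' eqD.
apply: indistinguishable_eq => // x.
exists (sched_update alpha (schedule_of phi) x); split.
- rewrite -{1}(label_schedule_of ne1).
  exact/sched_update_solves/ranking_schedule_is_schedule.
- rewrite (sched_update_dynamics eqD) -{1}(label_schedule_of ne1').
  exact/sched_update_solves/ranking_schedule_is_schedule.
Qed.
End Classification.

Section NeighbourLabel.
Variables (n : nat) (nb : 'I_n -> 'I_n).
Hypothesis nb_transitive : forall i j, exists2 e, e < n & iter e nb i = j.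

Definition nb_label (t : 'I_n -> nat) : {ffun 'I_n -> bool} :=
  [ffun i => t (nb i) < t i].

Lemma card_all_dynamics_nb_label alpha local : 0 < n ->
  (forall D x, is_schedule D ->
     solves nb (fun phi i => phi i) local (nb_label (rank D)) x
            (sched_update alpha D x)) ->
  (forall phi phi', phi != [ffun=> true] -> phi' != [ffun=> true] ->
     indistinguishable nb (fun phi i => phi i) local phi phi' -> phi = phi') ->
  #|all_dynamics alpha n| = (2 ^ n).-1.
Proof.
move=> n_gt0 sched_solves label_inj.
apply: (@card_all_dynamics n nb (fun phi i => phi i) local alpha nb_label
          (fun phi => run phi nb n)) => //.
- by move=> t t' tt'; apply/ffunP => i; rewrite !ffunE tt'.
- by move=> t i; rewrite /= ffunE.
- move=> t; have [i _ min_i] := @arg_minnP _ (Ordinal n_gt0) xpredT t isT.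
  by apply/eqP => /ffunP /(_ i); rewrite !ffunE ltnNge min_i.
- by move=> phi ne1; apply/ffunP => i; rewrite ffunE ltn_run.
Qed.
End NeighbourLabel.

Section Rule140.
Variable n : nat.
Implicit Types (x y : conf n) (phi psi : {ffun 'I_n -> bool}).

Definition local140 x phi (i : 'I_n) v := x i && (~~ x (prev i) || v).
Local Notation solves140 := (solves (@next n) (fun phi i => phi i) local140).

Lemma sched_update140_solves D x : is_schedule D ->
  solves140 (nb_label (@next n) (rank D)) x (sched_update 140 D x).
Proof.
move=> sD i; rewrite ffunE -/(seen 140 D x i (next i)) sched_update_cell //.
rewrite /rule /= /local140; case xi: (x i) => //=; congr (~~ _ || _).
rewrite /seen; case: ifP => // earlier.
rewrite sched_update_cell // next_prev [seen _ _ _ _ i]seen_later // xi.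
by rewrite /rule /= orbT andbT.
Qed.

Hypothesis n_gt3 : 3 < n.

(* In the window 1 1 1 0 starting at [j], cell [j+1] becomes 0 exactly when it
   reads the new value of cell [j+2], which is 0. *)
Lemma solves140_window psi j y : solves140 psi (window j [:: 0; 1; 2]) y ->
  y (shift j 1) = ~~ psi (shift j 1).
Proof.
move=> sol.
have y3 : y (shift j 3) = false.
  by rewrite sol /local140 !ffunE !map_cons !inE; simpl_shift_eqs.
have y2 : y (shift j 2) = false.
  rewrite sol /local140 next_shift prev_shiftS y3 !ffunE !map_cons !inE.
  by simpl_shift_eqs; case: (psi _).
rewrite sol /local140 next_shift prev_shiftS y2 !ffunE !map_cons !inE.
by simpl_shift_eqs; case: (psi _).
Qed.

Lemma indistinguishable140_eq phi phi' :
  indistinguishable (@next n) (fun phi i => phi i) local140 phi phi' -> phi = phi'.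
Proof.
move=> indist; apply/ffunP => i; have [j <-] := exists_shift i 1.
have [y [sol sol']] := indist (window j [:: 0; 1; 2]).
by apply: negb_inj; rewrite -(solves140_window sol) -(solves140_window sol').
Qed.

Lemma card_all_dynamics140 : #|all_dynamics 140 n| = (2 ^ n).-1.
Proof.
apply: (card_all_dynamics_nb_label (@next_transitive n)) => //.
- by apply: leq_trans n_gt3.
- exact: sched_update140_solves.
- by move=> phi phi' _ _; apply: indistinguishable140_eq.
Qed.
End Rule140.

Section Rule28.
Variable n : nat.
Implicit Types (x y : conf n) (phi psi : {ffun 'I_n -> bool}).

Definition local28 x phi (i : 'I_n) (v : bool) :=
  if v then ~~ x i && ~~ x (next i) else x i.
Local Notation solves28 := (solves (@prev n) (fun phi i => phi i) local28).

Lemma sched_update28_solves D x : is_schedule D ->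
  solves28 (nb_label (@prev n) (rank D)) x (sched_update 28 D x).
Proof.
move=> sD i; rewrite ffunE -/(seen 28 D x i (prev i)) sched_update_cell //.
rewrite /rule /= /local28; case: (seen 28 D x i (prev i)) => /=; last by rewrite orbF.
case xi: (x i) => //=; congr (~~ _).
rewrite /seen; case: ifP => // earlier.
by rewrite sched_update_cell // prev_next [seen _ _ _ _ i]seen_later // xi /rule /= orbF.
Qed.

Hypothesis n_gt3 : 3 < n.

(* In the window 0 1 0 0 starting at [j], cells [j+1] and [j+2] end up 1,
   so cell [j+3] becomes 1 exactly when it reads the new value of [j+2]. *)
Lemma solves28_window psi j y : solves28 psi (window j [:: 1]) y ->
  y (shift j 3) = psi (shift j 3).
Proof.
move=> sol.
have y0 : y (shift j 0) = false.
  rewrite sol /local28 next_shift !ffunE !map_cons !inE.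
  by simpl_shift_eqs; rewrite if_same.
have y1 : y (shift j 1) = true.
  rewrite sol /local28 next_shift prev_shiftS y0 !ffunE !map_cons !inE.
  by simpl_shift_eqs; case: (psi _).
have y2 : y (shift j 2) = true.
  rewrite sol /local28 next_shift prev_shiftS y1 !ffunE !map_cons !inE.
  by simpl_shift_eqs; case: (psi _).
rewrite sol /local28 next_shift prev_shiftS y2 !ffunE !map_cons !inE.
by simpl_shift_eqs; case: (psi _).
Qed.

Lemma indistinguishable28_eq phi phi' :
  indistinguishable (@prev n) (fun phi i => phi i) local28 phi phi' -> phi = phi'.
Proof.
move=> indist; apply/ffunP => i; have [j <-] := exists_shift i 3.
have [y [sol sol']] := indist (window j [:: 1]).
by rewrite -(solves28_window sol) -(solves28_window sol').
Qed.

Lemma card_all_dynamics28 : #|all_dynamics 28 n| = (2 ^ n).-1.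
Proof.
apply: (card_all_dynamics_nb_label (@prev_transitive n)) => //.
- by apply: leq_trans n_gt3.
- exact: sched_update28_solves.
- by move=> phi phi' _ _; apply: indistinguishable28_eq.
Qed.
End Rule28.

Section Rule32.
Variable n : nat.
Implicit Types (x y : conf n) (phi psi : {ffun 'I_n -> bool}).

Definition label32 (t : 'I_n -> nat) : {ffun 'I_n -> bool} :=
  [ffun i => (t (prev i) < t i) || (t (next i) < t i)].
Definition local32 x phi (i : 'I_n) (v : bool) :=
  x (prev i) && ~~ x i && x (next i) && ~~ phi i.
Local Notation solves32 := (solves (@next n) (fun _ _ => false) local32).

(* A neighbour updated before cell [i] can only hold a 1 if [i] holds a 1,
   and then [i] becomes 0 anyway. *)
Lemma sched_update32_solves D x : is_schedule D ->
  solves32 (label32 (rank D)) x (sched_update 32 D x).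
Proof.
move=> sD i; rewrite sched_update_cell // /rule /= /local32 ffunE.
case xi: (x i); first by rewrite /= !andbF.
have seen_prev : seen 32 D x i (prev i) = x (prev i) && ~~ (rank D (prev i) < rank D i).
  rewrite /seen; case: ifP => earlier; last by rewrite andbT.
  rewrite sched_update_cell // next_prev [seen _ _ _ _ i]seen_later // xi.
  by rewrite /rule /= !andbF.
have seen_next : seen 32 D x i (next i) = x (next i) && ~~ (rank D (next i) < rank D i).
  rewrite /seen; case: ifP => earlier; last by rewrite andbT.
  rewrite sched_update_cell // prev_next [seen _ _ _ _ i]seen_later // xi.
  by rewrite /rule /= andbF.
rewrite seen_prev seen_next.
by case: (x (prev i)); case: (x (next i)); case: (_ < _); case: (_ < _).
Qed.

Hypothesis n_gt3 : 3 < n.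

Lemma solves32_window psi j y : solves32 psi (window j [:: 0; 2]) y ->
  y (shift j 1) = ~~ psi (shift j 1).
Proof.
move=> sol; rewrite sol /local32 next_shift prev_shiftS !ffunE !map_cons !inE.
by simpl_shift_eqs.
Qed.

Lemma indistinguishable32_eq phi phi' :
  indistinguishable (@next n) (fun _ _ => false) local32 phi phi' -> phi = phi'.
Proof.
move=> indist; apply/ffunP => i; have [j <-] := exists_shift i 1.
have [y [sol sol']] := indist (window j [:: 0; 2]).
by apply: negb_inj; rewrite -(solves32_window sol) -(solves32_window sol').
Qed.

Lemma card_all_dynamics32 : #|all_dynamics 32 n| = (2 ^ n).-1.
Proof.
have n_gt0 : 0 < n by apply: leq_trans n_gt3.
apply: (@card_all_dynamics n (@next n) (fun _ _ => false) local32 32 label32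
          (fun phi => run phi (@next n) n)) => //.
- by move=> t t' tt'; apply/ffunP => i; rewrite !ffunE !tt'.
- move=> t; have [i _ min_i] := @arg_minnP _ (Ordinal n_gt0) xpredT t isT.
  by apply/eqP => /ffunP /(_ i); rewrite !ffunE !ltnNge !min_i.
- move=> phi ne1; apply/ffunP => i; rewrite ffunE.
  case phi_i: (phi i); first by rewrite (ltn_run (@next_transitive n)) ?phi_i ?orbT.
  by rewrite [run _ _ _ i]run_eq0 ?phi_i.
- exact: sched_update32_solves.
- by move=> phi phi' _ _; apply: indistinguishable32_eq.
Qed.
End Rule32.

Section Rule44.
Variable n : nat.
Implicit Types (x y : conf n) (phi psi : {ffun 'I_n -> bool}).

Definition local44 x phi (i : 'I_n) (v : bool) :=
  if v then ~~ x i && x (next i) else x i.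
Local Notation solves44 := (solves (@prev n) (fun phi i => phi i) local44).

Lemma sched_update44_solves D x : is_schedule D ->
  solves44 (nb_label (@prev n) (rank D)) x (sched_update 44 D x).
Proof.
move=> sD i; rewrite ffunE -/(seen 44 D x i (prev i)) sched_update_cell //.
rewrite /rule /= /local44; case: (seen 44 D x i (prev i)) => /=; last by rewrite orbF.
case xi: (x i) => //=.
rewrite /seen; case: ifP => // earlier.
by rewrite sched_update_cell // prev_next [seen _ _ _ _ i]seen_later // xi /rule /= orbF.
Qed.

(* In the window 0 0 1 0 1 starting at [j], cells [j+2] and [j+3] end up 1,
   so cell [j+4] is cleared exactly when it reads the new value of [j+3]. *)
Lemma solves44_window psi j y : 4 < n -> solves44 psi (window j [:: 2; 4]) y ->
  y (shift j 4) = ~~ psi (shift j 4).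
Proof.
move=> n_gt4 sol.
have y0 : y (shift j 0) = false.
  rewrite sol /local44 next_shift !ffunE !map_cons !inE.
  by simpl_shift_eqs; rewrite if_same.
have y1 : y (shift j 1) = false.
  rewrite sol /local44 next_shift prev_shiftS y0 !ffunE !map_cons !inE.
  by simpl_shift_eqs; case: (psi _).
have y2 : y (shift j 2) = true.
  rewrite sol /local44 next_shift prev_shiftS y1 !ffunE !map_cons !inE.
  by simpl_shift_eqs; case: (psi _).
have y3 : y (shift j 3) = true.
  rewrite sol /local44 next_shift prev_shiftS y2 !ffunE !map_cons !inE.
  by simpl_shift_eqs; case: (psi _).
rewrite sol /local44 next_shift prev_shiftS y3 !ffunE !map_cons !inE.
by simpl_shift_eqs; case: (psi _).
Qed.

(* With four cells the window above wraps around; the windows 0 1 0 1 and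
   0 1 1 1 together still reveal [psi j], as an exhaustive check of the eight
   equations involved shows. *)
Lemma solves44_windows4 psi j y z : n = 4 -> psi != [ffun=> true] ->
  solves44 psi (window j [:: 1; 3]) y -> solves44 psi (window j [:: 1; 2; 3]) z ->
  y (shift j 0) && z (shift j 0) = ~~ psi (shift j 0).
Proof.
move=> n4 ne1 sol_y sol_z.
have shift4 : shift j 4 = shift j 0.
  by apply: val_inj; rewrite /= addn0 -{1}n4 modnDr.
have not_all :
    ~~ [&& psi (shift j 0), psi (shift j 1), psi (shift j 2) & psi (shift j 3)].
  apply: contra ne1 => /and4P [p0 p1 p2 p3]; apply/eqP/ffunP => i; rewrite ffunE.
  have [e en <-] := next_transitive j i; rewrite iter_next.
  have : e < 4 by rewrite -n4.
  by case: e {en} => [|[|[|[|e]]]].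
have prev0 : prev (shift j 0) = shift j 3 by rewrite -shift4 prev_shiftS.
move: (sol_y (shift j 0)) (sol_y (shift j 1)) (sol_y (shift j 2)) (sol_y (shift j 3))
      (sol_z (shift j 0)) (sol_z (shift j 1)) (sol_z (shift j 2)) (sol_z (shift j 3))
      not_all.
rewrite /local44 !prev_shiftS prev0 !next_shift shift4 !ffunE !map_cons !inE.
simpl_shift_eqs.
move: (psi (shift j 0)) (psi (shift j 1)) (psi (shift j 2)) (psi (shift j 3))
      (y (shift j 0)) (y (shift j 1)) (y (shift j 2)) (y (shift j 3))
      (z (shift j 0)) (z (shift j 1)) (z (shift j 2)) (z (shift j 3)).
by do 12! case.
Qed.

Hypothesis n_gt3 : 3 < n.

Lemma indistinguishable44_eq phi phi' : phi != [ffun=> true] -> phi' != [ffun=> true] ->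
  indistinguishable (@prev n) (fun phi i => phi i) local44 phi phi' -> phi = phi'.
Proof.
move=> ne1 ne1' indist; apply/ffunP => i.
have [n4 | n_gt4] : n = 4 \/ 4 < n by lia.
- have [y [sol_y sol_y']] := indist (window i [:: 1; 3]).
  have [z [sol_z sol_z']] := indist (window i [:: 1; 2; 3]).
  rewrite -(shift0 i); apply: negb_inj.
  rewrite -(solves44_windows4 n4 ne1 sol_y sol_z).
  by rewrite -(solves44_windows4 n4 ne1' sol_y' sol_z').
- have [j <-] := exists_shift i 4.
  have [y [sol sol']] := indist (window j [:: 2; 4]).
  by apply: negb_inj; rewrite -(solves44_window n_gt4 sol) -(solves44_window n_gt4 sol').
Qed.

Lemma card_all_dynamics44 : #|all_dynamics 44 n| = (2 ^ n).-1.
Proof.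
apply: (card_all_dynamics_nb_label (@prev_transitive n)) => //.
- by apply: leq_trans n_gt3.
- exact: sched_update44_solves.
- exact: indistinguishable44_eq.
Qed.
End Rule44.

Import GRing.Theory.
Local Open Scope ring_scope.

Theorem mainTheorem5 (n alpha : nat) :
  (3 < n)%N -> alpha \in [:: 28; 32; 44; 140]%N ->
  mu alpha n = (2%:R ^+ n - 1) / (3%:R ^+ n - 2%:R ^+ n.+1 + 2%:R) :> rat.
Proof.
move=> n_gt3 alpha_rule; rewrite /mu.
have -> : #|all_dynamics alpha n| = (2 ^ n).-1.
  move: alpha_rule; rewrite !inE => /or4P [] /eqP ->.
  - exact: card_all_dynamics28.
  - exact: card_all_dynamics32.
  - exact: card_all_dynamics44.
  - exact: card_all_dynamics140.
by rewrite -subn1 natrB ?expn_gt0 // natrX.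
Qed.
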